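(* For every $\gamma\in[0,1]$, the Equal Filling Till Threshold (EFTT) algorithm with threshold $\gamma$ (described in the context) is $\left(1 - \frac{e^{\gamma-1}}{\gamma+1}\right)$-USW, i.e., on every instance the fractional matching $X$ it outputs satisfies $\mathrm{usw}(X)\ge \left(1 - \frac{e^{\gamma-1}}{\gamma+1}\right)\mathrm{usw}(X^* )$ for every fractional matching $X^*$ of the instance.
   Context: Online class matching (divisible setting): an instance is a bipartite graph $G=(N,M,E)$ with known agents $N$, items $M$, $E\subseteq M\times N$ ($a$ likes $o$ iff $(o,a)\in E$); agents are partitioned into $k$ known classes $N_1,\dots,N_k$. Items arrive one at a time in adversarial order; upon arrival of $o$ its set of liking agents is revealed and fractions of $o$ must be irrevocably assigned to agents liking it. A fractional matching is $X=(x_{o,a})\in[0,1]^{M\times N}$ supported on $E$ with $\sum_a x_{o,a}\le1$ for each item and $\sum_o x_{o,a}\le 1$ for each agent; $\deg_X(v)$ denotes the sum of $x$ over edges incident to $v$; an agent is saturated if its degree is $1$. $V_i(X)=\sum_{a\in N_i}\sum_o x_{o,a}$ and $\mathrm{usw}(X)=\sum_i V_i(X)$. EFTT with threshold $\gamma$: the matching is increased continuously (water-filling). Upon arrival of item $o$: Phase I: let $Z_\gamma$ be the set of classes containing at least one agent that likes $o$ and has current degree less than $\gamma$. While $Z_\gamma\neq\emptyset$ and $o$ is not fully assigned, continuously assign mass of $o$, splitting it equally among the classes in $Z_\gamma$; within each class $i\in Z_\gamma$, the mass goes to the agent(s) of class $i$ liking $o$ with minimum current degree; a class is removed from $Z_\gamma$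 once it no longer has an agent liking $o$ with degree less than $\gamma$. Phase II: once $Z_\gamma=\emptyset$, continuously assign the remaining mass of $o$ to the unsaturated agent(s) liking $o$ with smallest current degree, regardless of class, until $o$ is fully assigned or all agents liking $o$ are saturated. *)

From mathcomp Require Import all_boot all_order all_algebra.
From mathcomp Require Import reals sequences exp.
Set Implicit Arguments. Unset Strict Implicit. Unset Printing Implicit Defensive.
Import Order.TTheory GRing.Theory Num.Theory.
Local Open Scope ring_scope.

(* Instance: items 'I_m arrive in index order 0,1,...,m-1 (an arbitrary
   adversarial order is captured by the arbitrary labelling of items);
   agents form a finite type N; cls a : 'I_k is the class of agent a;
   E o a  <=>  agent a likes item o. *)

Section Defs.
Variables (R : realType) (m k : nat) (N : finType).
Variables (cls : N -> 'I_k) (E : 'I_m -> N -> bool).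

Definition frac_matching (X : 'I_m -> N -> R) : Prop :=
  [/\ forall o a, 0 <= X o a <= 1,
      forall o a, ~~ E o a -> X o a = 0,
      forall o, \sum_(a : N) X o a <= 1
    & forall a, \sum_(o : 'I_m) X o a <= 1].

Definition usw (X : 'I_m -> N -> R) : R :=
  \sum_(i < k) \sum_(a : N | cls a == i) \sum_(o : 'I_m) X o a.

Definition deg_before (X : 'I_m -> N -> R) (o : 'I_m) (a : N) : R :=
  \sum_(o' : 'I_m | (o' < o)%N) X o' a.

(* One arrival of item o under EFTT with threshold gam, the current degrees
   being d; y a is the fraction of o given to agent a.  The continuous
   water-filling is described by its water levels:
   - Phase I: class i (capacity c i = mass needed to raise all its agents
     liking o to degree gam) receives min(tau, c i), where tau is the common
     per-class amount poured (equal splitting among active classes), and the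
     total poured in Phase I is min(1, sum_i c i).  Inside class i the mass
     fills the liking agents of minimum degree, i.e. agents liking o are
     raised to max(d a, lvl i).
   - Phase II: the remaining mass r is water-filled among all agents liking o
     up to saturation 1: agents are raised to min(1, max(d1 a, L)), the total
     being min(r, total residual capacity). *)
Definition eftt_step (gam : R) (o : 'I_m) (d : N -> R) (y : N -> R) : Prop :=
  let c := fun i : 'I_k =>
    \sum_(a : N | (cls a == i) && E o a) Num.max 0 (gam - d a) in
  exists (tau : R) (lvl : 'I_k -> R) (L : R),
    let mI := fun i : 'I_k => Num.min tau (c i) in
    let d1 := fun a : N => if E o a then Num.max (d a) (lvl (cls a)) else d a in
    let r := 1 - \sum_(i < k) mI i in
    [/\ 0 <= tau,
        \sum_(i < k) mI i = Num.min 1 (\sum_(i < k) c i),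
        forall i : 'I_k,
          \sum_(a : N | (cls a == i) && E o a) (Num.max (d a) (lvl i) - d a)
            = mI i,
        \sum_(a : N | E o a) (Num.min 1 (Num.max (d1 a) L) - d1 a)
            = Num.min r (\sum_(a : N | E o a) (1 - d1 a))
      & forall a : N,
          y a = if E o a then Num.min 1 (Num.max (d1 a) L) - d a else 0].

Definition eftt_output (gam : R) (X : 'I_m -> N -> R) : Prop :=
  forall o : 'I_m, eftt_step gam o (deg_before X o) (X o).

End Defs.

(* Primal-dual argument.  Let c = e^(gam-1)/(gam+1) and let G be the convex potential
   with slope c on [0, gam] and slope e^(x-1) on [gam, 1], so that G(1) = 1 - c and all
   slopes are at most 1.  Charge each agent a with G(final degree of a), and each item o
   with the part of its mass that did not raise G.  These charges are nonnegative and sum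
   to usw(X).  On an edge (o, a), either a ends saturated and its charge alone is
   G(1) = 1 - c, or a is unsaturated right after o.  Then o was fully assigned, and every
   agent receiving part of o ended at degree at most max(x, gam), where x is the degree
   of a after o: Phase I never fills beyond gam, and Phase II fills up to a common water
   level.  Hence o is charged at least 1 - G'(max(x, gam)), and
   G(x) + 1 - G'(max(x, gam)) >= 1 - c.  Weak LP duality for fractional matchings
   concludes.  The water levels of each arrival exist by the intermediate value theorem. *)

From mathcomp Require Import all_boot all_order all_algebra.
From mathcomp Require Import reals sequences exp.
From mathcomp Require Import boolp topology normedtype.
From mathcomp Require Import lra.
Import Order.TTheory GRing.Theory Num.Theory.
Import numFieldNormedType.Exports.
Set Implicit Arguments. Unset Strict Implicit. Unset Printing Implicit Defensive.
Local Open Scope ring_scope.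

(* Splits innermost min/max first, so that the case hypotheses are min/max free. *)
Ltac no_minmax t := lazymatch t with
  | context [@Order.max _ _ _ _] => fail
  | context [@Order.min _ _ _ _] => fail
  | _ => idtac end.

Ltac case_minmax :=
  repeat match goal with
  | |- context [@Order.max _ _ ?x ?y] => no_minmax x; no_minmax y; case: (leP x y) => ?
  | |- context [@Order.min _ _ ?x ?y] => no_minmax x; no_minmax y; case: (leP x y) => ?
  end.

Ltac lra_minmax := case_minmax; lra.

Section WaterLevels.
Variable R : realType.

Lemma ivt_sum (I : finType) (P : pred I) (F : I -> R -> R) (a b v : R) :
  (forall i, continuous (F i)) -> a <= b ->
  \sum_(i | P i) F i a <= v <= \sum_(i | P i) F i b ->
  exists2 t, a <= t <= b & \sum_(i | P i) F i t = v.
Proof.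
move=> F_cont ab /andP[Fa_v v_Fb].
have [||t t_in Ft] := @IVT R (fun t => \sum_(i | P i) F i t) a b v ab.
- apply: continuous_subspaceT; apply: continuous_big => //.
  exact: add_continuous.
- by rewrite ge_min Fa_v le_max v_Fb orbT.
by rewrite in_itv /= in t_in; exists t.
Qed.

Lemma common_share_exists (I : finType) (c : I -> R) (s : R) :
  (forall i, 0 <= c i) -> 0 <= s <= \sum_i c i ->
  exists2 tau, 0 <= tau <= \sum_i c i & \sum_i Num.min tau (c i) = s.
Proof.
move=> c_ge0 s_bound; apply: ivt_sum.
- move=> i t; apply: (@continuous_min R R id (fun=> c i)) => //; exact: cvg_cst.
- by apply: sumr_ge0 => i _.
rewrite big1 => [|i _]; last exact: min_l.
rewrite (eq_bigr c) // => i _; apply: min_r.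
by rewrite (bigD1 i) //= lerDl; apply: sumr_ge0 => j _.
Qed.

Lemma raise_level_exists (I : finType) (P : pred I) (d : I -> R) (l s : R) :
  (forall i, 0 <= d i) -> 0 <= l ->
  0 <= s <= \sum_(i | P i) Num.max 0 (l - d i) ->
  exists2 t, 0 <= t <= l & \sum_(i | P i) (Num.max (d i) t - d i) = s.
Proof.
move=> d_ge0 l_ge0 s_bound; apply: ivt_sum => //.
- move=> i t; apply: cvgB; last exact: cvg_cst.
  apply: (@continuous_max R R (fun=> d i) id) => //; exact: cvg_cst.
rewrite big1 => [|i _]; last by rewrite max_l ?subrr.
rewrite (eq_bigr (fun i => Num.max 0 (l - d i))) // => i _.
by move: (d_ge0 i); lra_minmax.
Qed.

Lemma fill_level_exists (I : finType) (P : pred I) (d : I -> R) (s : R) :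
  (forall i, 0 <= d i <= 1) -> 0 <= s <= \sum_(i | P i) (1 - d i) ->
  exists2 t, 0 <= t <= 1 & \sum_(i | P i) (Num.min 1 (Num.max (d i) t) - d i) = s.
Proof.
move=> d01 s_bound; apply: ivt_sum => //.
- move=> i t; apply: cvgB; last exact: cvg_cst.
  apply: (@continuous_min R R (fun=> 1) (Num.max (d i))); first exact: cvg_cst.
  apply: (@continuous_max R R (fun=> d i) id) => //; exact: cvg_cst.
rewrite big1 => [|i _]; last by move: (d01 i); lra_minmax.
rewrite (eq_bigr (fun i => 1 - d i)) // => i _.
by move: (d01 i); lra_minmax.
Qed.

End WaterLevels.

Section Potential.
Variable R : realType.

Lemma expRB_le (u v : R) : u <= v -> expR v - expR u <= expR v * (v - u).
Proof.
move=> uv; have -> : expR u = expR v * expR (u - v) by rewrite -expRD; congr expR; lra.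
have := expR_ge1Dx (u - v); have := expR_gt0 v; nra.
Qed.

Definition loss (gam : R) := expR (gam - 1) / (gam + 1).

Definition potential (gam x : R) :=
  if x <= gam then loss gam * x
  else loss gam * gam + expR (x - 1) - expR (gam - 1).

(* The right derivative of the convex function [potential gam] on [0, 1]. *)
Definition potential_slope (gam x : R) :=
  if x <= gam then loss gam else expR (x - 1).

Variable gam : R.
Hypothesis gam01 : 0 <= gam <= 1.

Lemma loss_mulD1 : loss gam * (gam + 1) = expR (gam - 1).
Proof. have [g0 _] := andP gam01; rewrite /loss divfK // gt_eqF //; lra. Qed.

Lemma loss_ge0 : 0 <= loss gam.
Proof. have [g0 _] := andP gam01; rewrite /loss divr_ge0 ?expR_ge0 //; lra. Qed.

Lemma loss_le_expR : loss gam <= expR (gam - 1).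
Proof.
have [g0 _] := andP gam01; have := loss_mulD1; have := loss_ge0; nra.
Qed.

Lemma potential1 : potential gam 1 = 1 - loss gam.
Proof.
have [_ g1] := andP gam01; have := loss_mulD1; rewrite mulrDr mulr1.
rewrite /potential subrr expR0; case: ifP => [g1'|_]; last lra.
have -> : gam = 1 by lra.
by rewrite subrr expR0; lra.
Qed.

Lemma potential_le x y : x <= y -> potential gam x <= potential gam y.
Proof.
move=> xy; have := loss_ge0; have := loss_le_expR; rewrite /potential.
case: ifP => hx; case: ifP => hy.
- by move=> _ c_ge0; rewrite ler_wpM2l.
- have : expR (gam - 1) <= expR (y - 1) by rewrite ler_expR; move: hy => /negbT; lra.
  nra.
- by move: hx => /negbT; lra.
- have : expR (x - 1) <= expR (y - 1) by rewrite ler_expR; lra.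
  lra.
Qed.

Lemma potential0 : potential gam 0 = 0.
Proof. by have [g0 _] := andP gam01; rewrite /potential g0 mulr0. Qed.

Lemma potential_ge0 x : 0 <= x -> 0 <= potential gam x.
Proof. by move=> x0; rewrite -potential0 potential_le. Qed.

Lemma potential_slope_le x y :
  x <= y -> potential_slope gam x <= potential_slope gam y.
Proof.
move=> xy; have := loss_le_expR; rewrite /potential_slope.
case: ifP => hx; case: ifP => hy //.
- have : expR (gam - 1) <= expR (y - 1) by rewrite ler_expR; move: hy => /negbT; lra.
  lra.
- by move: hx => /negbT; lra.
- by rewrite ler_expR; lra.
Qed.

Lemma potential_slope_le1 x : x <= 1 -> potential_slope gam x <= 1.
Proof.
have [_ g1] := andP gam01; move=> x1; apply: le_trans (potential_slope_le x1) _.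
rewrite /potential_slope; case: ifP => _; last by rewrite expR_le1; lra.
by apply: le_trans loss_le_expR _; rewrite expR_le1; lra.
Qed.

Lemma potentialB_le x y :
  0 <= x <= y -> potential gam y - potential gam x <= potential_slope gam y * (y - x).
Proof.
move=> /andP[x0 xy]; have := loss_ge0; have := loss_le_expR.
rewrite /potential /potential_slope; case: ifP => hy; case: ifP => hx.
- lra.
- by move: hx => /negbT; lra.
- have gy : gam - 1 <= y - 1 by move: hy => /negbT; lra.
  have := expRB_le gy; have : expR (gam - 1) <= expR (y - 1) by rewrite ler_expR.
  nra.
- have xy1 : x - 1 <= y - 1 by lra.
  have := expRB_le xy1; lra.
Qed.

Lemma potential_edge x :
  0 <= x -> 1 - loss gam <= potential gam x + (1 - potential_slope gam (Num.max x gam)).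
Proof.
move=> x0; have := potential_ge0 x0; have := loss_mulD1; rewrite mulrDr mulr1.
rewrite /potential /potential_slope; case: (leP x gam) => hx.
- rewrite lexx; lra.
- rewrite (lt_geF hx); lra.
Qed.

End Potential.

Section Load.
Variables (R : realType) (m : nat) (N : finType).
Implicit Type X : 'I_m -> N -> R.

Definition load X (j : nat) (a : N) := \sum_(o : 'I_m | (o < j)%N) X o a.

Lemma load0 X a : load X 0 a = 0.
Proof. by rewrite /load big_pred0. Qed.

Lemma loadS X (o : 'I_m) a : load X o.+1 a = load X o a + X o a.
Proof.
rewrite /load (bigD1 o) ?ltnSn //= addrC; congr (_ + _).
by apply: eq_bigl => o'; rewrite ltnS ltn_neqAle andbC.
Qed.

Lemma load_all X a : load X m a = \sum_o X o a.
Proof. by apply: eq_bigl => o; rewrite ltn_ord. Qed.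

Lemma load_le_sum X j a : (forall o, 0 <= X o a) -> load X j a <= \sum_o X o a.
Proof.
move=> X_ge0; rewrite [leRHS](bigID (fun o : 'I_m => (o < j)%N)) /= lerDl.
exact: sumr_ge0.
Qed.

Lemma load_update X (o : 'I_m) (y : N -> R) j a : (j <= o)%N ->
  load (fun o' => if o' == o then y else X o') j a = load X j a.
Proof.
move=> jo; apply: eq_bigr => o' o'j; rewrite ifN //.
by apply: contraTneq o'j => ->; rewrite -leqNgt.
Qed.

Lemma sum_load_incr X (F : R -> R) a :
  \sum_(o < m) (F (load X o.+1 a) - F (load X o a)) = F (load X m a) - F 0.
Proof.
have := telescope_sumr (fun j => F (load X j a)) (leq0n m).
by rewrite big_mkord load0.
Qed.

End Load.

Section Arrival.
Variables (R : realType) (m k : nat) (N : finType).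
Variables (cls : N -> 'I_k) (E : 'I_m -> N -> bool).

Section Phases.
Variables (gam : R) (o : 'I_m) (d y : N -> R) (tau : R) (lvl : 'I_k -> R) (L : R).
Hypotheses (gam_le1 : gam <= 1) (d01 : forall a, 0 <= d a <= 1).

Let cap i := \sum_(a | (cls a == i) && E o a) Num.max 0 (gam - d a).
Let phase1 := \sum_(i < k) Num.min tau (cap i).
Let d1 a := if E o a then Num.max (d a) (lvl (cls a)) else d a.

Hypothesis phase1_class : forall i,
  \sum_(a | (cls a == i) && E o a) (Num.max (d a) (lvl i) - d a) = Num.min tau (cap i).
Hypothesis phase2_total :
  \sum_(a | E o a) (Num.min 1 (Num.max (d1 a) L) - d1 a)
  = Num.min (1 - phase1) (\sum_(a | E o a) (1 - d1 a)).
Hypothesis y_def :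
  forall a, y a = if E o a then Num.min 1 (Num.max (d1 a) L) - d a else 0.

(* Above gam, class cls b would receive more than its capacity cap (cls b). *)
Lemma class_level_le b : E o b -> d b < lvl (cls b) -> lvl (cls b) <= gam.
Proof.
move=> Eb db; rewrite leNgt; apply/negP => gam_lt.
suff : cap (cls b) <
       \sum_(a | (cls a == cls b) && E o a) (Num.max (d a) (lvl (cls b)) - d a).
  by rewrite phase1_class; apply/negP; rewrite -leNgt ge_min lexx orbT.
rewrite /cap (bigD1 b) /= ?eqxx ?Eb // [X in _ < X](bigD1 b) /= ?eqxx ?Eb //.
apply: ltr_leD; first by move: db gam_lt; lra_minmax.
by apply: ler_sum => a _; move: gam_lt; lra_minmax.
Qed.

Lemma phase1_bounds a : d a <= d1 a <= 1.
Proof.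
have := d01 a; rewrite /d1; case: ifP => [Ea|_]; last lra.
case: (ltP (d a) (lvl (cls a))) => [da_lt|]; last lra.
by have := class_level_le Ea da_lt; have := gam_le1; lra.
Qed.

Lemma phase1_raised_le a : d a < d1 a -> d1 a <= gam.
Proof.
rewrite /d1; case: ifP => [Ea|_]; last lra.
by case: (ltP (d a) (lvl (cls a))) => [/(class_level_le Ea)|]; lra.
Qed.

Lemma phase1_mass : \sum_(a | E o a) (d1 a - d a) = phase1.
Proof.
rewrite /phase1 (partition_big cls xpredT) //=; apply: eq_bigr => i _.
rewrite -phase1_class; apply: eq_big => [a|a /andP[Ea /eqP <-]].
- by rewrite andbC.
- by rewrite /d1 Ea.
Qed.

Lemma sum_y :
  \sum_a y a = phase1 + Num.min (1 - phase1) (\sum_(a | E o a) (1 - d1 a)).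
Proof.
rewrite -phase2_total -phase1_mass -big_split /= [RHS]big_mkcond [LHS]big_mkcond.
by apply: eq_bigr => a _; rewrite y_def; case: ifP => // _; lra.
Qed.

Lemma y_ge0 a : 0 <= y a.
Proof.
rewrite y_def; case: ifP => // _.
by move: (phase1_bounds a); lra_minmax.
Qed.

Lemma deg_add_y_le1 a : d a + y a <= 1.
Proof.
rewrite y_def; case: ifP => _; last by have := d01 a; lra.
by move: (phase1_bounds a); lra_minmax.
Qed.

(* Otherwise Phase II saturates every agent liking o, a included. *)
Lemma phase2_unexhausted a : E o a -> d a + y a < 1 ->
  Num.min (1 - phase1) (\sum_(b | E o b) (1 - d1 b)) = 1 - phase1.
Proof.
move=> Ea; rewrite y_def Ea addrC subrK => a_unsat.
case: leP => // residual_lt; exfalso.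
have no_residual : \sum_(b | E o b) (1 - Num.min 1 (Num.max (d1 b) L)) = 0.
  have -> : \sum_(b | E o b) (1 - Num.min 1 (Num.max (d1 b) L)) =
    \sum_(b | E o b) (1 - d1 b) - \sum_(b | E o b) (Num.min 1 (Num.max (d1 b) L) - d1 b).
    by rewrite -sumrB; apply: eq_bigr => b _; lra.
  by rewrite phase2_total min_r ?subrr // ltW.
have residual_ge0 b : E o b -> 0 <= 1 - Num.min 1 (Num.max (d1 b) L).
  by move=> _; lra_minmax.
by have := psumr_eq0P residual_ge0 no_residual Ea; move: a_unsat; lra_minmax.
Qed.

Lemma unsaturated_full a : E o a -> d a + y a < 1 -> \sum_b y b = 1.
Proof. by move=> Ea a_unsat; rewrite sum_y (phase2_unexhausted Ea a_unsat); lra. Qed.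

(* Phase I recipients end at most at gam, Phase II recipients at most at the final level L. *)
Lemma unsaturated_water_level a : E o a -> d a + y a < 1 ->
  forall b, 0 < y b -> d b + y b <= Num.max (d a + y a) gam.
Proof.
move=> Ea; rewrite y_def Ea addrC subrK => a_unsat b; rewrite y_def.
case: ifP => Eb; last by rewrite ltxx.
have L_le : L <= Num.min 1 (Num.max (d1 a) L) by move: a_unsat; lra_minmax.
have := phase1_bounds b; rewrite le_max.
case: (leP (d1 b) L) => [b_le|L_lt] d1b yb_gt0; apply/orP.
- by left; move: L_le b_le; lra_minmax.
- right; have d1b_le : d1 b <= gam.
    by apply: phase1_raised_le; move: yb_gt0 d1b; lra_minmax.
  by move: d1b d1b_le; lra_minmax.
Qed.

End Phases.

Lemma eftt_step_props gam o (d y : N -> R) :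
  0 <= gam <= 1 -> (forall a, 0 <= d a <= 1) -> eftt_step cls E gam o d y ->
  [/\ forall a, 0 <= y a, forall a, d a + y a <= 1 &
      forall a, E o a -> d a + y a < 1 ->
        \sum_b y b = 1 /\ forall b, 0 < y b -> d b + y b <= Num.max (d a + y a) gam].
Proof.
move=> /andP[_ gam_le1] d01 [tau [lvl [L /= [_ _ class phase2 y_def]]]].
split=> [a|a|a Ea a_unsat].
- exact: y_ge0 gam_le1 d01 class y_def a.
- exact: deg_add_y_le1 gam_le1 d01 class y_def a.
split; first exact: (unsaturated_full class phase2 y_def Ea a_unsat).
exact: (unsaturated_water_level gam_le1 d01 class y_def Ea a_unsat).
Qed.

Lemma eftt_step_exists gam o (d : N -> R) :
  0 <= gam <= 1 -> (forall a, 0 <= d a <= 1) -> exists y, eftt_step cls E gam o d y.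
Proof.
move=> /andP[gam_ge0 gam_le1] d01.
pose cap i := \sum_(a | (cls a == i) && E o a) Num.max 0 (gam - d a).
have cap_ge0 i : 0 <= cap i by apply: sumr_ge0 => a _; rewrite le_max lexx.
have [|tau /andP[tau_ge0 _] tau_share] :=
  common_share_exists (s := Num.min 1 (\sum_i cap i)) cap_ge0.
  by rewrite le_min ler01 sumr_ge0 //= ge_min lexx orbT.
have d_ge0 a : 0 <= d a by case/andP: (d01 a).
have level i : exists t,
    \sum_(a | (cls a == i) && E o a) (Num.max (d a) t - d a) = Num.min tau (cap i).
  have [|t _ lvl_i] := raise_level_exists (P := fun a => (cls a == i) && E o a)
    (s := Num.min tau (cap i)) d_ge0 gam_ge0.
    by rewrite le_min tau_ge0 cap_ge0 ge_min lexx orbT.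
  by exists t.
have [lvl class] := choice level.
pose d1 a := if E o a then Num.max (d a) (lvl (cls a)) else d a.
have d1_01 a : 0 <= d1 a <= 1.
  by have := phase1_bounds gam_le1 d01 class a; rewrite /d1 /=; case/andP: (d01 a); lra.
pose phase1 := \sum_i Num.min tau (cap i).
have [|L _ phase2] := fill_level_exists (P := E o)
  (s := Num.min (1 - phase1) (\sum_(a | E o a) (1 - d1 a))) d1_01.
  have : phase1 <= 1 by rewrite /phase1 tau_share ge_min lexx.
  have : 0 <= \sum_(a | E o a) (1 - d1 a).
    by apply: sumr_ge0 => a _; have := d1_01 a; lra.
  lra_minmax.
by exists (fun a => if E o a then Num.min 1 (Num.max (d1 a) L) - d a else 0), tau, lvl, L.
Qed.

Lemma load_bounds gam (X : 'I_m -> N -> R) j : 0 <= gam <= 1 -> (j <= m)%N ->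
  (forall o : 'I_m, (o < j)%N -> eftt_step cls E gam o (deg_before X o) (X o)) ->
  forall a, 0 <= load X j a <= 1.
Proof.
move=> gam01; elim: j => [_ _ a|j IH jm steps a]; first by rewrite load0 lexx ler01.
have load_j := IH (ltnW jm) (fun o oj => steps o (ltnW oj)).
have [y_ge0 y_le _] := eftt_step_props gam01 load_j (steps (Ordinal jm) (ltnSn j)).
have -> : load X j.+1 a = load X j a + X (Ordinal jm) a := loadS X (Ordinal jm) a.
by have := y_ge0 a; have := y_le a; have := load_j a; lra.
Qed.

Lemma eftt_output_exists gam :
  0 <= gam <= 1 -> exists X : 'I_m -> N -> R, eftt_output cls E gam X.
Proof.
move=> gam01.
have partial j : (j <= m)%N -> exists X : 'I_m -> N -> R,
    forall o : 'I_m, (o < j)%N -> eftt_step cls E gam o (deg_before X o) (X o).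
  elim: j => [_|j IH jm]; first by exists (fun _ _ => 0).
  have [X steps] := IH (ltnW jm); pose oj := Ordinal jm.
  have [y step_y] := eftt_step_exists oj gam01 (load_bounds gam01 (ltnW jm) steps).
  pose X' o := if o == oj then y else X o.
  have unchanged (o : 'I_m) : (o <= j)%N -> deg_before X' o = deg_before X o.
    by move=> o_le; apply: funext => a; apply: load_update.
  exists X' => o; rewrite ltnS leq_eqVlt => /orP[/eqP o_j | o_lt].
  - have -> : o = oj by apply: val_inj.
    rewrite unchanged //.
    have -> : X' oj = y by rewrite /X' eqxx.
    exact: step_y.
  - rewrite unchanged; last exact: ltnW.
    have -> : X' o = X o by rewrite /X' ifN //; apply: contraTneq o_lt => ->; rewrite ltnn.
    exact: steps.
have [X steps] := partial m (leqnn m).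
by exists X => o; apply: steps.
Qed.

End Arrival.

Section Welfare.
Variables (R : realType) (m k : nat) (N : finType).
Variables (cls : N -> 'I_k) (E : 'I_m -> N -> bool).

Lemma usw_total (X : 'I_m -> N -> R) : usw cls X = \sum_a \sum_o X o a.
Proof. by rewrite /usw [RHS](partition_big cls xpredT). Qed.

Lemma frac_matching_dual_bound (Xs : 'I_m -> N -> R) (alpha : N -> R)
    (beta : 'I_m -> R) (r : R) :
  frac_matching E Xs -> (forall a, 0 <= alpha a) -> (forall o, 0 <= beta o) ->
  (forall o a, E o a -> r <= alpha a + beta o) ->
  r * \sum_a \sum_o Xs o a <= \sum_a alpha a + \sum_o beta o.
Proof.
move=> [Xs01 Xs_supp Xs_item Xs_agent] alpha_ge0 beta_ge0 feasible.
have edge o a : r * Xs o a <= Xs o a * alpha a + Xs o a * beta o.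
  have [Eoa|nEoa] := boolP (E o a); last by rewrite Xs_supp // !(mulr0, mul0r) addr0.
  by rewrite -mulrDr mulrC ler_wpM2l ?feasible //; case/andP: (Xs01 o a).
apply: le_trans (_ : \sum_a \sum_o (Xs o a * alpha a + Xs o a * beta o) <= _).
  rewrite mulr_sumr; apply: ler_sum => a _.
  by rewrite mulr_sumr; apply: ler_sum => o _; exact: edge.
under eq_bigr => a _ do rewrite big_split /=.
rewrite big_split /= [X in _ + X]exchange_big /=; apply: lerD.
- by apply: ler_sum => a _; rewrite -mulr_suml ler_piMl ?alpha_ge0 ?Xs_agent.
- by apply: ler_sum => o _; rewrite -mulr_suml ler_piMl ?beta_ge0 ?Xs_item.
Qed.

Variables (gam : R) (X : 'I_m -> N -> R).
Hypotheses (gam01 : 0 <= gam <= 1) (X_out : eftt_output cls E gam X).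

Definition agent_dual a := potential gam (\sum_o X o a).

Definition item_dual (o : 'I_m) :=
  \sum_a (X o a - (potential gam (load X o.+1 a) - potential gam (load X o a))).

Lemma load_ord_bounds (o : 'I_m) a : 0 <= load X o a <= 1.
Proof. exact: load_bounds gam01 (ltnW (ltn_ord o)) (fun o' _ => X_out o') a. Qed.

Lemma assigned_bounds (o : 'I_m) a : 0 <= X o a /\ load X o.+1 a <= 1.
Proof.
have [X_ge0 X_le _] := eftt_step_props (d := load X o) gam01 (load_ord_bounds o) (X_out o).
by rewrite loadS.
Qed.

Lemma load_incr_le (o : 'I_m) a M : load X o.+1 a <= M ->
  potential gam (load X o.+1 a) - potential gam (load X o a)
  <= potential_slope gam M * X o a.
Proof.
move=> load_le; have [X_ge0 _] := assigned_bounds o a.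
have [load_ge0 _] := andP (load_ord_bounds o a).
apply: le_trans (potentialB_le gam01 _) _.
  by rewrite load_ge0 loadS lerDl.
rewrite [in X in _ * X]loadS addrAC subrr add0r ler_wpM2r //.
exact: potential_slope_le.
Qed.

Lemma agent_dual_ge0 a : 0 <= agent_dual a.
Proof.
by apply: potential_ge0 => //; apply: sumr_ge0 => o _; case: (assigned_bounds o a).
Qed.

Lemma item_dual_ge0 o : 0 <= item_dual o.
Proof.
apply: sumr_ge0 => a _; rewrite subr_ge0.
have [X_ge0 load_le1] := assigned_bounds o a.
apply: le_trans (load_incr_le load_le1) _.
by rewrite ler_piMl // potential_slope_le1.
Qed.

Lemma dual_objective :
  \sum_a agent_dual a + \sum_o item_dual o = \sum_a \sum_o X o a.
Proof.
rewrite /item_dual; under [X in _ + X]eq_bigr => o _ do rewrite sumrB.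
rewrite sumrB [X in _ - X]exchange_big /=.
under [X in _ - X]eq_bigr => a _ do
  rewrite sum_load_incr load_all (potential0 gam01) subr0 -/(agent_dual a).
by rewrite addrC subrK exchange_big.
Qed.

Lemma dual_feasible o a : E o a -> 1 - loss gam <= agent_dual a + item_dual o.
Proof.
move=> Eoa.
have [_ _ unsat] := eftt_step_props (d := load X o) gam01 (load_ord_bounds o) (X_out o).
have [_ x_le1] := assigned_bounds o a; set x := load X o.+1 a in x_le1 *.
have x_eq : load X o a + X o a = x by rewrite /x loadS.
have x_ge0 : 0 <= x.
  have [X_ge0 _] := assigned_bounds o a; have [load_ge0 _] := andP (load_ord_bounds o a).
  by rewrite -x_eq addr_ge0.
have agent_ge : potential gam x <= agent_dual a.
  by apply: (potential_le gam01); rewrite /x load_le_sum // => o'; case: (assigned_bounds o' a).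
case: (ltP x 1) => [x_lt1|x_ge1]; last first.
  have x1 : x = 1 by apply/eqP; rewrite eq_le x_le1 x_ge1.
  have : potential gam x = 1 - loss gam by rewrite x1 potential1.
  by have := item_dual_ge0 o; lra.
have a_unsat : load X o a + X o a < 1 by rewrite x_eq.
have [full level] := unsat a Eoa a_unsat.
suff item_ge : 1 - potential_slope gam (Num.max x gam) <= item_dual o.
  by have := potential_edge gam01 x_ge0; lra.
rewrite /item_dual sumrB full lerD2l lerN2 -[leRHS]mulr1 -full mulr_sumr.
apply: ler_sum => b _; have [X_ge0 _] := assigned_bounds o b.
have [X0|X_pos] := eqVneq (X o b) 0.
  by rewrite loadS X0 addr0 subrr mulr0.
apply: load_incr_le; rewrite loadS -x_eq; apply: level.
by rewrite lt_def X_pos.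
Qed.

Lemma eftt_usw_bound (Xs : 'I_m -> N -> R) :
  frac_matching E Xs -> (1 - loss gam) * usw cls Xs <= usw cls X.
Proof.
move=> Xs_match; rewrite !usw_total -dual_objective.
exact: frac_matching_dual_bound Xs_match agent_dual_ge0 item_dual_ge0 dual_feasible.
Qed.

End Welfare.

Theorem lemma1 (R : realType) (m k : nat) (N : finType)
    (cls : N -> 'I_k) (E : 'I_m -> N -> bool) (gam : R) :
  0 <= gam <= 1 ->
  (exists X : 'I_m -> N -> R, eftt_output cls E gam X) /\
  (forall X : 'I_m -> N -> R, eftt_output cls E gam X ->
   forall Xs : 'I_m -> N -> R, frac_matching E Xs ->
     (1 - expR (gam - 1) / (gam + 1)) * usw cls Xs <= usw cls X).
Proof.
move=> gam01; split; first exact: eftt_output_exists.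
by move=> X X_out Xs Xs_match; exact: (eftt_usw_bound gam01 X_out Xs_match).
Qed.
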